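(* Let $G$ be a game state and let $P$ be a game path starting at $G$ that follows the Split-First Strategy. Let $m$ be any move that the Split-First Strategy permits at $G$. Then there exists a game path $P'$ starting at $G$ whose first move is $m$, which follows the Split-First Strategy, and which has the same length as $P$.
   Context: Fibonacci numbers are indexed by $F_1=1$, $F_2=2$, $F_{i+1}=F_i+F_{i-1}$. A game state is a finite multiset of Fibonacci numbers (tracked by index). The legal moves are: $C_1$: replace $F_1,F_1$ by $F_2$; for $i\ge 2$, $C_i$: replace $F_{i-1},F_i$ by $F_{i+1}$ (a ''combining move''); $S_2$: replace $F_2,F_2$ by $F_1,F_3$; for $i\ge 3$, $S_i$: replace $F_i,F_i$ by $F_{i-2},F_{i+1}$ (a ''splitting move''). Here $C_1$ is grouped with the splitting moves, and ''combining move'' means $C_i$ with $i\ge 2$. Every sequence of legal moves is finite. A game path from a state $G$ is a sequence of legal moves starting at $G$ and continuing until no legal move is available; its length is its number of moves. A game path follows the Split-First Strategy if at each state along it: whenever some splitting move or $C_1$ is available, the move taken is one of those (any choice); otherwise the move taken is the combining move $C_i$ ($i\ge 2$) with the smallest index $i$ among those available. *)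

From mathcomp Require Import all_boot.
Set Implicit Arguments. Unset Strict Implicit. Unset Printing Implicit Defensive.

(* A game state is a finite multiset of Fibonacci numbers F_i (i >= 1),
   represented by its multiplicity function: g i = number of copies of F_i. *)
Definition state := nat -> nat.

Definition game_state (g : state) : Prop :=
  g 0 = 0 /\ exists N, forall i, N <= i -> g i = 0.

(* Comb i = C_i (i >= 1; C_1 : F1,F1 -> F2; C_i : F_{i-1},F_i -> F_{i+1}),
   Split i = S_i (i >= 2; S_2 : F2,F2 -> F1,F3; S_i : F_i,F_i -> F_{i-2},F_{i+1}). *)
Inductive move := Comb of nat | Split of nat.

Definition legal (g : state) (m : move) : bool :=
  match m with
  | Comb i => if i == 1 then 2 <= g 1 else [&& 2 <= i, 1 <= g i.-1 & 1 <= g i]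
  | Split i => if i == 2 then 2 <= g 2 else (3 <= i) && (2 <= g i)
  end.

Definition removed (m : move) (j : nat) : nat :=
  match m with
  | Comb i => if i == 1 then 2 * (j == 1) else (j == i.-1) + (j == i)
  | Split i => 2 * (j == i)
  end.

Definition added (m : move) (j : nat) : nat :=
  match m with
  | Comb i => if i == 1 then nat_of_bool (j == 2) else nat_of_bool (j == i.+1)
  | Split i => if i == 2 then (j == 1) + (j == 3) else (j == i - 2) + (j == i.+1)
  end.

Definition apply_move (g : state) (m : move) : state :=
  fun j => g j - removed m j + added m j.

Definition terminal (g : state) : Prop := forall m, legal g m = false.

Definition split_class (m : move) : bool :=
  match m with Comb i => i == 1 | Split _ => true end.

Definition sf_ok (g : state) (m : move) : Prop :=
  legal g m /\
  ((exists m', legal g m' /\ split_class m') -> split_class m) /\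
  (~ (exists m', legal g m' /\ split_class m') ->
     exists i, m = Comb i /\ 2 <= i /\
       forall j, 2 <= j -> j < i -> legal g (Comb j) = false).

Fixpoint game_path (g : state) (ms : seq move) : Prop :=
  match ms with
  | [::] => terminal g
  | m :: ms' => legal g m /\ game_path (apply_move g m) ms'
  end.

Fixpoint follows_sf (g : state) (ms : seq move) : Prop :=
  match ms with
  | [::] => True
  | m :: ms' => sf_ok g m /\ follows_sf (apply_move g m) ms'
  end.

From Pilot Require Import Defs.
From mathcomp Require Import all_boot zify.
From Stdlib Require Import FunctionalExtensionality.
Set Implicit Arguments. Unset Strict Implicit.

(* A split-class move (C_1 or some S_i) consumes exactly two
   copies of a single Fibonacci number F_(source m), and distinct legal
   split-class moves have distinct sources.  Hence two legal split-class
   moves with different sources touch disjoint parts of the state: each stays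
   legal after the other, and performing them in either order gives the same
   state (a diamond).  On the other hand, the moves permitted by the
   Split-First Strategy at a state are either a single combining move (the
   one of least index) or are all split-class.  The theorem follows by
   induction on P: if m is the first move m0 of P there is nothing to do;
   otherwise m and m0 are split-class moves with different sources, m is
   still permitted after m0, the induction hypothesis rebuilds the tail of P
   starting with m, and the diamond lets us swap m and m0. *)

(* A legal move never removes more copies than are present, so the truncated
   subtraction in [apply_move] is exact. *)
Lemma removed_le_legal g m j : legal g m -> removed m j <= g j.
Proof.
case: m => i /=.
- have [_|_] := eqVneq i 1; first by have [->|] := eqVneq j 1 => /=; lia.
  case/and3P=> hi h1 h2.
  by have [e1|] := eqVneq j i.-1; have [e2|] := eqVneq j i => /=;
    rewrite ?e1 ?e2; lia.
- have [->|_] := eqVneq i 2; first by have [->|] := eqVneq j 2 => /=; lia.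
  by case/andP=> _; have [->|] := eqVneq j i => /=; lia.
Qed.

(* The index whose copies a split-class move consumes. *)
Definition source (m : move) : nat :=
  match m with Comb _ => 1 | Defs.Split i => i end.

Lemma removed_split_class m j :
  split_class m -> removed m j = 2 * (j == source m).
Proof. by case: m => i //= /eqP ->. Qed.

Lemma legal_split_mono g g' m : split_class m -> legal g m ->
  g (source m) <= g' (source m) -> legal g' m.
Proof.
case: m => i /=; first by move/eqP-> => /=; lia.
by move=> _; have [->|_] := eqVneq i 2 => /= [|/andP[-> ?]] /=; lia.
Qed.

Lemma source_inj g m m0 : legal g m -> legal g m0 ->
  split_class m -> split_class m0 -> source m = source m0 -> m = m0.
Proof.
have split_ge2 i : legal g (Defs.Split i) -> 2 <= i.
  by rewrite /=; have [->|_] := eqVneq i 2 => // /andP[]; lia.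
case: m => i; case: m0 => i0 l l0 /= s s0 e.
- by rewrite (eqP s) (eqP s0).
- by move: (split_ge2 _ l0); rewrite -e.
- by move: (split_ge2 _ l); rewrite e.
- by rewrite e.
Qed.

Section Diamond.
Variables (g : state) (m m0 : move).
Hypotheses (lm : legal g m) (lm0 : legal g m0).
Hypotheses (sm : split_class m) (sm0 : split_class m0).
Hypothesis sources_differ : source m != source m0.

Let removed_disjoint j : removed m j = 0 \/ removed m0 j = 0.
Proof.
rewrite !removed_split_class //.
by have [->|] := eqVneq j (source m); [right; rewrite (negbTE sources_differ)|left].
Qed.

Lemma legal_after_split : legal (apply_move g m0) m.
Proof.
apply: (legal_split_mono sm lm); rewrite /apply_move.
have [h|h] := removed_disjoint (source m); last by rewrite h; lia.
by move: h; rewrite removed_split_class // eqxx.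
Qed.

Lemma apply_move_comm :
  apply_move (apply_move g m) m0 = apply_move (apply_move g m0) m.
Proof.
apply: functional_extensionality => j; rewrite /apply_move.
have := removed_le_legal j lm; have := removed_le_legal j lm0.
have := removed_disjoint j; lia.
Qed.

End Diamond.

Lemma sf_ok_split_class g m : legal g m -> split_class m -> sf_ok g m.
Proof. by move=> l s; do 2 split=> //; case; exists m. Qed.

(* Two moves permitted at the same state are equal unless both are split-class:
   when no split-class move is legal, the permitted move is the unique legal
   combining move of least index. *)
Lemma sf_ok_cases g m m0 : sf_ok g m -> sf_ok g m0 ->
  m = m0 \/ [/\ split_class m & split_class m0].
Proof.
move=> [l [sc cb]] [l0 [sc0 cb0]].
have [s|ns] := boolP (split_class m).
  by right; split=> //; apply: sc0; exists m.
have nex : ~ exists m', legal g m' /\ split_class m'.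
  by move=> ex; move: ns; rewrite sc.
left; have [i [em [hi mini]]] := cb nex; have [i0 [em0 [hi0 mini0]]] := cb0 nex.
subst m m0.
have [lt|] := ltnP i i0; first by move: (mini0 i hi lt); rewrite l.
rewrite leq_eqVlt => /orP[/eqP-> //|lt].
by move: (mini i0 hi0 lt); rewrite l0.
Qed.

(* The exchange property, without the (unneeded) finiteness assumption. *)
Lemma sf_path_exchange G P m :
  game_path G P -> follows_sf G P -> sf_ok G m ->
  exists rest : seq move,
    game_path G (m :: rest) /\ follows_sf G (m :: rest) /\
    size (m :: rest) = size P.
Proof.
elim: P G m => [|m0 P IH] G m /=.
  by move=> term _ [lm _]; move: (term m); rewrite lm.
move=> [l0 pathP] [ok0 sfP] okm.
have [->|[sm sm0]] := sf_ok_cases okm ok0; first by exists P.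
have [lm _] := okm.
have [same|differ] := eqVneq (source m) (source m0).
  by rewrite (source_inj lm l0 sm sm0 same); exists P.
have lm_after : legal (apply_move G m0) m by exact: legal_after_split.
have [rest [[_ path_rest] [[_ sf_rest] size_rest]]] :=
  IH _ _ pathP sfP (sf_ok_split_class lm_after sm).
have lm0_after : legal (apply_move G m) m0.
  by apply: legal_after_split; rewrite // eq_sym.
exists (m0 :: rest) => /=; rewrite apply_move_comm //.
split; first by [].
split; first by split; [|split; first exact: sf_ok_split_class].
by move: size_rest => /= ->.
Qed.

Theorem lemma2p1 (G : state) (P : seq move) (m : move) :
  game_state G -> game_path G P -> follows_sf G P -> sf_ok G m ->
  exists rest : seq move,
    game_path G (m :: rest) /\ follows_sf G (m :: rest) /\
    size (m :: rest) = size P.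
Proof. by move=> _; apply: sf_path_exchange. Qed.
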